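(* Let $\mathcal{X}$ be a Banach space and $J:\mathcal{X}\to\mathbb{R}\cup\{\infty\}$ a convex, absolutely one-homogeneous functional. Let $v\in\mathcal{X}$ and $p\in\partial J(v)$. Then the set $$\mathcal{M}^{\mathrm{IC}}=\{u\in\mathcal{X}\ :\ [D_J^p(\cdot,v)\,\Box\, D_J^{-p}(\cdot,-v)](u)=0\}$$ is a nonempty linear subspace of $\mathcal{X}$.
   Context: Absolutely one-homogeneous: $J(\lambda u)=|\lambda|J(u)$ for all $\lambda\in\mathbb{R}$. Bregman distance: $D_J^{q}(u,w)=J(u)-J(w)-\langle q,u-w\rangle$ for $q\in\partial J(w)$ (note $-p\in\partial J(-v)$). The infimal convolution of $F,G:\mathcal{X}\to\mathbb{R}\cup\{\infty\}$ is $(F\Box G)(u)=\inf_{z\in\mathcal{X}}F(u-z)+G(z)$. *)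

From HB Require Import structures.
From mathcomp Require Import all_boot all_order all_algebra.
From mathcomp Require Import all_classical all_reals all_analysis.
Set Implicit Arguments. Unset Strict Implicit. Unset Printing Implicit Defensive.
Import Order.TTheory GRing.Theory Num.Theory.
Import numFieldNormedType.Exports.
Local Open Scope classical_set_scope.
Local Open Scope ring_scope.

Section Defs.
Context {R : realType} {X : completeNormedModType R}.

(* elements of the (topological) dual X^* : continuous linear functionals;
   the pairing <q, u> is q u *)
Definition is_dual (q : X -> R) : Prop :=
  (forall (a : R) (x y : X), q (a *: x + y) = a * q x + q y) /\ continuous q.

(* J : X -> R ∪ {+oo} *)
Definition proper_valued (J : X -> \bar R) : Prop := forall x, J x != -oo%E.

Definition convex_fun (J : X -> \bar R) : Prop :=
  forall (t : R) (x y : X), 0 < t -> t < 1 ->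
    (J (t *: x + (1 - t) *: y)%R <= t%:E * J x + (1 - t)%:E * J y)%E.

Definition abs_one_homogeneous (J : X -> \bar R) : Prop :=
  forall (l : R) (u : X), J (l *: u)%R = (`|l|%:E * J u)%E.

Definition subdiff (J : X -> \bar R) (w : X) (q : X -> R) : Prop :=
  is_dual q /\ forall u, (J w + (q (u - w)%R)%:E <= J u)%E.

Definition bregman (J : X -> \bar R) (q : X -> R) (u w : X) : \bar R :=
  (J u - J w - (q (u - w)%R)%:E)%E.

Definition infconv (F G : X -> \bar R) (u : X) : \bar R :=
  ereal_inf (range (fun z => (F (u - z)%R + G z)%E)).

End Defs.

(* Since J is absolutely one-homogeneous and p is a subgradient at v, J v = <p, v> and
   <p, .> <= J everywhere. Both Bregman distances then reduce to the gap
   F = J - <p, .>, evaluated at x and at -x respectively; F is nonnegative, positively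
   homogeneous and subadditive. The zero set of G u = inf_z F (u - z) + F (- z) is
   closed under positive scaling (rescale z), negation (substitute z - u for z) and
   addition (add e/2-minimisers and use subadditivity of F). *)

From HB Require Import structures.
From mathcomp Require Import all_boot all_order all_algebra.
From mathcomp Require Import all_classical all_reals all_analysis.
From mathcomp Require Import ring lra.
Import Order.TTheory GRing.Theory Num.Theory.
Import numFieldNormedType.Exports.
Local Open Scope classical_set_scope.
Local Open Scope ring_scope.

Section DualPairing.
Context {R : realType} {X : completeNormedModType R} {p : X -> R}.
Hypothesis p_lin : forall (a : R) (x y : X), p (a *: x + y) = a * p x + p y.

Lemma dual0 : p 0 = 0.
Proof. by have := p_lin 1 0 0; rewrite scale1r addr0 mul1r; lra. Qed.

Lemma dualD x y : p (x + y) = p x + p y.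
Proof. by rewrite -[x in LHS]scale1r p_lin mul1r. Qed.

Lemma dualZ a x : p (a *: x) = a * p x.
Proof. by rewrite -[_ *: x]addr0 p_lin dual0 addr0. Qed.

Lemma dualN x : p (- x) = - p x.
Proof. by rewrite -scaleN1r dualZ mulN1r. Qed.

End DualPairing.

Section OneHomogeneous.
Context {R : realType} {X : completeNormedModType R} {J : X -> \bar R}.
Hypothesis J_hom : abs_one_homogeneous J.

Lemma hom_fun0 : J 0 = 0%E.
Proof. by rewrite -(scale0r (0 : X)) J_hom normr0 mul0e. Qed.

Lemma hom_funN x : J (- x) = J x.
Proof. by rewrite -scaleN1r J_hom normrN normr1 mul1e. Qed.

Hypotheses (J_proper : proper_valued J) (J_convex : convex_fun J).

Lemma hom_convex_subadditive x y : (J (x + y)%R <= J x + J y)%E.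
Proof.
have half_gt0 : (0 : R) < 2^-1 by rewrite invr_gt0.
have half_lt1 : (2^-1 : R) < 1 by rewrite invf_lt1 // ltr1n.
have one_half : (1 - 2^-1 : R) = 2^-1 by rewrite {1}(splitr 1) mul1r addrK.
have midpoint : x + y = 2 *: (2^-1 *: x + 2^-1 *: y).
  by rewrite scalerDr !scalerA mulfV // !scale1r.
have := J_convex (2^-1) x y half_gt0 half_lt1; rewrite one_half => convexity.
rewrite midpoint J_hom ger0_norm //.
apply: le_trans (lee_wpmul2l _ convexity) _ => //.
move: (J_proper x) (J_proper y).
case: (J x) => [a| |] //; case: (J y) => [b| |] // _ _; rewrite ?leey //.
by rewrite -!EFinM -EFinD lee_fin mulrDr !mulrA mulfV // !mul1r.
Qed.

Section Subgradient.
Context {v : X} {p : X -> R}.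
Hypotheses (p_lin : forall (a : R) (x y : X), p (a *: x + y) = a * p x + p y)
  (p_sub : forall u, (J v + (p (u - v))%:E <= J u)%E).

Lemma subdiff_hom_eq : J v = (p v)%:E.
Proof.
have at0 := p_sub 0; have at2v := p_sub (2 *: v).
rewrite hom_fun0 add0r dualN // in at0.
rewrite J_hom dualD // dualN // dualZ // in at2v.
move: at0 at2v (J_proper v); case: (J v) => [r| |] //= at0 at2v _.
rewrite -EFinD lee_fin in at0.
rewrite ger0_norm // -EFinD -EFinM lee_fin in at2v.
by congr EFin; lra.
Qed.

Lemma subdiff_hom_le x : ((p x)%:E <= J x)%E.
Proof.
by have := p_sub x; rewrite subdiff_hom_eq -EFinD dualD // dualN // addrC subrK.
Qed.

End Subgradient.
End OneHomogeneous.

Definition dual_gap {R : realType} {X : completeNormedModType R}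
  (J : X -> \bar R) (p : X -> R) (x : X) : \bar R := (J x - (p x)%:E)%E.

Section DualGap.
Context {R : realType} {X : completeNormedModType R} {J : X -> \bar R} {p : X -> R}.
Hypotheses (p_lin : forall (a : R) (x y : X), p (a *: x + y) = a * p x + p y)
  (J_hom : abs_one_homogeneous J).

Lemma bregman_dual_gap v x : J v = (p v)%:E -> bregman J p x v = dual_gap J p x.
Proof.
move=> Jv; rewrite /bregman /dual_gap Jv -addeA -!EFinN -EFinD.
by congr (_ + _%:E)%E; rewrite (dualD p_lin) (dualN p_lin); ring.
Qed.

Lemma bregman_opp_dual_gap v x :
  J v = (p v)%:E -> bregman J (fun y => - p y) x (- v) = dual_gap J p (- x).
Proof.
move=> Jv; rewrite /bregman /dual_gap !(hom_funN J_hom) Jv -addeA -!EFinN -EFinD.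
by congr (_ + _%:E)%E; rewrite !(dualD p_lin) !(dualN p_lin); ring.
Qed.

Hypothesis p_le : forall x, ((p x)%:E <= J x)%E.

Lemma dual_gap_ge0 x : (0 <= dual_gap J p x)%E.
Proof. by rewrite /dual_gap sube_ge0 ?p_le ?orbT. Qed.

Lemma dual_gap0 : dual_gap J p 0 = 0%E.
Proof. by rewrite /dual_gap (hom_fun0 J_hom) (dual0 p_lin) sube0. Qed.

Lemma dual_gapZ a x : 0 < a -> dual_gap J p (a *: x) = (a%:E * dual_gap J p x)%E.
Proof.
move=> a_gt0; rewrite /dual_gap J_hom (dualZ p_lin) gtr0_norm // EFinM.
by rewrite muleBr // fin_num_adde_defl.
Qed.

Hypotheses (J_proper : proper_valued J) (J_convex : convex_fun J).

Lemma dual_gap_subadditive x y :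
  (dual_gap J p (x + y)%R <= dual_gap J p x + dual_gap J p y)%E.
Proof.
rewrite /dual_gap (dualD p_lin) EFinD oppeD // [X in (_ <= X)%E]addeACA.
exact/leeD2r/hom_convex_subadditive.
Qed.

End DualGap.

Lemma ereal_inf_range_eq0P {R : realType} {T : Type} (h : T -> \bar R) :
  (forall z, 0 <= h z)%E ->
  ereal_inf (range h) = 0%E <-> forall e : R, 0 < e -> exists z, (h z < e%:E)%E.
Proof.
move=> h_ge0; split=> [inf0 e e_gt0|small].
  have : (ereal_inf (range h) < e%:E)%E by rewrite inf0 lte_fin.
  by case/ereal_inf_lt => _ [z _ <-] hz; exists z.
apply/eqP; rewrite eq_le; apply/andP; split.
  apply/lee_addgt0Pr => e e_gt0; rewrite add0e.
  have [z hz] := small e e_gt0.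
  by apply: le_trans (ltW hz); apply: ereal_inf_lbound; exists z.
by apply: le_ereal_inf_tmp => _ [z _ <-].
Qed.

Section InfconvSublinear.
Context {R : realType} {X : completeNormedModType R} (F : X -> \bar R).
Hypotheses (F_ge0 : forall x, (0 <= F x)%E) (F0 : F 0 = 0%E)
  (F_subadditive : forall x y, (F (x + y)%R <= F x + F y)%E)
  (F_posZ : forall (a : R) x, 0 < a -> F (a *: x) = (a%:E * F x)%E).

Let G := infconv F (fun x => F (- x)).

Lemma infconv_eq0P u :
  G u = 0%E <-> forall e : R, 0 < e -> exists z, (F (u - z)%R + F (- z)%R < e%:E)%E.
Proof. by apply: ereal_inf_range_eq0P => z; rewrite adde_ge0. Qed.

Lemma infconv0 : G 0 = 0%E.
Proof.
by apply/infconv_eq0P => e e_gt0; exists 0; rewrite subr0 oppr0 F0 adde0 lte_fin.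
Qed.

Lemma infconv_eq0N u : G u = 0%E -> G (- u) = 0%E.
Proof.
move/infconv_eq0P => small; apply/infconv_eq0P => e /small[z hz].
by exists (z - u); rewrite !opprB addKr addeC.
Qed.

Lemma infconv_eq0D u w : G u = 0%E -> G w = 0%E -> G (u + w) = 0%E.
Proof.
move=> /infconv_eq0P small_u /infconv_eq0P small_w; apply/infconv_eq0P => e e_gt0.
have half_gt0 : 0 < e / 2 by rewrite divr_gt0.
have [z1 hz1] := small_u _ half_gt0; have [z2 hz2] := small_w _ half_gt0.
exists (z1 + z2); rewrite (splitr e) EFinD.
apply: le_lt_trans (lteD hz1 hz2); rewrite addeACA.
apply: leeD; last by rewrite opprD.
by rewrite opprD addrACA.
Qed.

Lemma infconv_eq0Z_gt0 a u : 0 < a -> G u = 0%E -> G (a *: u) = 0%E.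
Proof.
move=> a_gt0 /infconv_eq0P small; apply/infconv_eq0P => e e_gt0.
have [z hz] := small _ (divr_gt0 e_gt0 a_gt0).
exists (a *: z); rewrite -scalerBr -scalerN !F_posZ // -ge0_muleDr //.
by rewrite -(divfK (lt0r_neq0 a_gt0) e) mulrC EFinM lte_pmul2l.
Qed.

Lemma infconv_eq0Z a u : G u = 0%E -> G (a *: u) = 0%E.
Proof.
move=> Gu; case: (ltrgtP a 0) => [a_lt0|a_gt0|->]; last by rewrite scale0r infconv0.
- by rewrite -[a]opprK scaleNr infconv_eq0N // infconv_eq0Z_gt0 // oppr_gt0.
- exact: infconv_eq0Z_gt0.
Qed.

End InfconvSublinear.

Theorem theorem4 (R : realType) (X : completeNormedModType R)
  (J : X -> \bar R) (v : X) (p : X -> R) :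
  proper_valued J -> convex_fun J -> abs_one_homogeneous J ->
  subdiff J v p ->
  let M := [set u : X | infconv (fun x => bregman J p x v)
                                (fun x => bregman J (fun y => - p y) x (- v)) u
                        = 0%E] in
  (exists u, M u) /\
  (forall u w, M u -> M w -> M (u + w)) /\
  (forall (a : R) u, M u -> M (a *: u)).
Proof.
move=> J_proper J_convex J_hom [[p_lin _] p_sub].
have Jv := subdiff_hom_eq J_hom J_proper p_lin p_sub.
have gap_ge0 := dual_gap_ge0 (subdiff_hom_le J_hom J_proper p_lin p_sub).
have gap0 := dual_gap0 p_lin J_hom.
have -> : (fun x => bregman J p x v) = dual_gap J p.
  by apply/funext => x; exact: bregman_dual_gap.
have -> : (fun x => bregman J (fun y => - p y) x (- v)) = (fun x => dual_gap J p (- x)).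
  by apply/funext => x; exact: bregman_opp_dual_gap.
split; first by exists 0; exact: infconv0.
split; first exact: infconv_eq0D gap_ge0 (dual_gap_subadditive p_lin J_hom J_proper J_convex).
exact: infconv_eq0Z gap_ge0 gap0 (dual_gapZ p_lin J_hom).
Qed.
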